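(* Let $\langle A\mid\mathcal{R}\rangle$ be a finite homogeneous presentation of a monoid $M$ and let $n$ be an integer at least the maximum length of a word appearing in a relation of $\mathcal{R}$. Let $\mathcal{R}'=\{(u\ell v,urv): (\ell,r)\in\mathcal{R},\ u,v\in A^*,\ |u\ell v|=n\}$ and let $M'$ be the monoid presented by $\langle A\mid \mathcal{R}'\rangle$. Then $\langle A\mid\mathcal{R}'\rangle$ is $n$-ary homogeneous (and $n$-ary multihomogeneous if $\langle A\mid\mathcal{R}\rangle$ is multihomogeneous), and $M$ and $M'$ are Rees-ideal-commensurable: the sets $I=\{[w]\in M: |w|\geq n\}$ and $I'=\{[w]\in M': |w|\geq n\}$ are finite Rees index ideals, isomorphic via $[w]_{\mathcal{R}'}\mapsto[w]_{\mathcal{R}}$. Consequently every finitely presented (multi)homogeneous monoid is Rees-ideal-commensurable to an $n$-ary (multi)homogeneous monoid.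
   Context: A finite presentation $\langle A\mid\mathcal{R}\rangle$ is homogeneous if $|u|=|v|$ for all $(u,v)\in\mathcal{R}$; multihomogeneous if $|u|_a=|v|_a$ for every $a\in A$ and $(u,v)\in\mathcal{R}$; $n$-ary homogeneous if $|u|=|v|=n$ for all $(u,v)\in\mathcal{R}$; $n$-ary multihomogeneous if both $n$-ary homogeneous and multihomogeneous. An ideal $U$ of a semigroup $S$ has finite Rees index if $S\setminus U$ is finite; semigroups $S_1,S_2$ are Rees-ideal-commensurable if there are finite Rees index ideals $U_i\subseteq S_i$ with $U_1\cong U_2$. In a homogeneous monoid all words representing an element have the same length, so $|w|$ for $[w]$ is well defined. *)

From mathcomp Require Import all_boot.
From Stdlib Require Import Relations.Relation_Operators.
Set Implicit Arguments. Unset Strict Implicit. Unset Printing Implicit Defensive.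

Definition word (A : finType) := seq A.

Definition relset (A : finType) := word A -> word A -> Prop.

Definition of_seq (A : finType) (R : seq (word A * word A)) : relset A :=
  fun l r => (l, r) \in R.

Definition finite_relset (A : finType) (R : relset A) : Prop :=
  exists s : seq (word A * word A), forall l r, R l r <-> (l, r) \in s.

Inductive step (A : finType) (R : relset A) : word A -> word A -> Prop :=
  | step_intro (u v l r : word A) : R l r -> step R (u ++ l ++ v) (u ++ r ++ v).

(* the congruence generated by R: w1 and w2 represent the same element
   of the monoid <A | R>, i.e. [w1]_R = [w2]_R *)
Definition congr (A : finType) (R : relset A) : word A -> word A -> Prop :=
  clos_refl_sym_trans (word A) (step R).

Definition homogeneous (A : finType) (R : relset A) : Prop :=
  forall l r, R l r -> size l = size r.

Definition multihomogeneous (A : finType) (R : relset A) : Prop :=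
  forall l r, R l r -> forall a : A, count_mem a l = count_mem a r.

Definition nary_homogeneous (A : finType) (n : nat) (R : relset A) : Prop :=
  forall l r, R l r -> size l = n /\ size r = n.

Definition nary_multihomogeneous (A : finType) (n : nat) (R : relset A) : Prop :=
  nary_homogeneous n R /\ multihomogeneous R.

Definition nary_rels (A : finType) (n : nat) (R : relset A) : relset A :=
  fun l' r' => exists u v l r,
    [/\ R l r, l' = u ++ l ++ v, r' = u ++ r ++ v & size (u ++ l ++ v) = n].

(* [w]_R lies in I = {[w] in <A|R> : |w| >= n} *)
Definition inI (A : finType) (R : relset A) (n : nat) (w : word A) : Prop :=
  exists w', congr R w w' /\ n <= size w'.

Definition finite_rees_index_ideal (A : finType) (R : relset A) (n : nat) : Prop :=
  (forall x w y : word A, inI R n w -> inI R n (x ++ w ++ y)) /\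
  (exists s : seq (word A),
     forall w, ~ inI R n w -> exists2 w', w' \in s & congr R w w').

(* the map [w]_{R'} |-> [w]_R is an isomorphism from I' onto I
   (it is multiplicative by construction: [w1][w2] = [w1 ++ w2]) *)
Definition canonical_iso (A : finType) (R R' : relset A) (n : nat) : Prop :=
  [/\ (forall w, inI R' n w -> inI R n w),
      (forall w1 w2, inI R' n w1 -> inI R' n w2 ->
         congr R' w1 w2 -> congr R w1 w2),
      (forall w1 w2, inI R' n w1 -> inI R' n w2 ->
         congr R w1 w2 -> congr R' w1 w2) &
      (forall w, inI R n w -> exists w', inI R' n w' /\ congr R w' w)].

(* Every relation of R' is a relation of R applied in a context, so R' is n-ary
   homogeneous and [w]_{R'} |-> [w]_R is well defined. Conversely, a rewriting
   step u l v -> u r v of R inside a word of length at least n can be cut down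
   to a window of length exactly n around l, which is a relation of R'; since R
   is homogeneous, all words along an R-derivation starting from a long word
   stay long, so R-congruent long words are R'-congruent. Both I and I' are
   ideals whose complements consist of classes of words shorter than n, of
   which there are finitely many. *)
From mathcomp Require Import all_boot.
From Stdlib Require Import Relations.Relation_Operators ClassicalEpsilon.
From mathcomp Require Import zify.
Set Implicit Arguments. Unset Strict Implicit. Unset Printing Implicit Defensive.

Lemma split_window (T : Type) (x m y : seq T) n :
  size m <= n -> n <= size (x ++ m ++ y) ->
  exists x1 x2 y1 y2,
    [/\ x = x1 ++ x2, y = y1 ++ y2 & size (x2 ++ m ++ y1) = n].
Proof.
rewrite !size_cat => le_m_n le_n_s.
have [le_ky | lt_yk] := leqP (n - size m) (size y).
- exists x, [::], (take (n - size m) y), (drop (n - size m) y).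
  by rewrite cats0 cat_take_drop /= size_cat size_take_min; split=> //; lia.
- set j := size x - (n - size m - size y).
  exists (take j x), (drop j x), y, [::].
  by rewrite cat_take_drop cats0 !size_cat size_drop; split=> //; lia.
Qed.

Section Words.
Variable A : finType.

Definition words (k : nat) : seq (word A) := [seq val t | t <- enum {: k.-tuple A}].

Lemma mem_words k (w : word A) : (w \in words k) = (size w == k).
Proof.
apply/mapP/eqP => [[t _ ->] | sz_w]; first exact: size_tuple.
by exists (Tuple (introT eqP sz_w)); rewrite ?mem_enum.
Qed.

Lemma nary_homogeneous_finite n (R : relset A) :
  nary_homogeneous n R -> finite_relset R.
Proof.
move=> nhR.
exists [seq p <- [seq (l, r) | l <- words n, r <- words n]
         | is_left (excluded_middle_informative (R p.1 p.2))] => l r.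
rewrite mem_filter /=; case: excluded_middle_informative => //= Rlr.
split=> // _; have [sz_l sz_r] := nhR _ _ Rlr.
by apply: allpairs_f; rewrite mem_words ?sz_l ?sz_r.
Qed.

End Words.

Section Congruence.
Variable A : finType.
Implicit Types (R S : relset A) (w x y : word A).

Lemma congr_cat R x y w1 w2 :
  congr R w1 w2 -> congr R (x ++ w1 ++ y) (x ++ w2 ++ y).
Proof.
elim=> [_ _ [u v l r Rlr] | w | w1' w2' _ IH | w1' w2' w3' _ IH1 _ IH2].
- apply: rst_step; have := step_intro (x ++ u) (v ++ y) Rlr.
  by rewrite -!catA.
- exact: rst_refl.
- exact: rst_sym.
- exact: rst_trans IH2.
Qed.

Lemma congr_sub R S :
  (forall w1 w2, step S w1 w2 -> step R w1 w2) ->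
  forall w1 w2, congr S w1 w2 -> congr R w1 w2.
Proof.
move=> stepSR w1 w2; elim=> [? ? /stepSR | w | ? ? _ IH | ? ? ? _ IH1 _ IH2].
- exact: rst_step.
- exact: rst_refl.
- exact: rst_sym.
- exact: rst_trans IH2.
Qed.

Lemma congr_size R : homogeneous R ->
  forall w1 w2, congr R w1 w2 -> size w1 = size w2.
Proof.
move=> hR w1 w2; elim=> [_ _ [u v l r Rlr] | // | _ _ _ -> // | ? ? ? _ -> _ -> //].
by rewrite !size_cat (hR _ _ Rlr).
Qed.

Lemma finite_rees_index_ideal_all R n : finite_rees_index_ideal R n.
Proof.
split.
- move=> x w y [w' [ww' le_n_w']]; exists (x ++ w' ++ y).
  split; first exact: congr_cat.
  by rewrite !size_cat (leq_trans le_n_w') // addnCA leq_addr.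
- exists (flatten [seq words A k | k <- iota 0 n]) => w notIw.
  exists w; last exact: rst_refl.
  have lt_w_n : size w < n.
    rewrite ltnNge; apply/negP => le_n_w; apply: notIw.
    by exists w; split=> //; apply: rst_refl.
  apply/flattenP; exists (words A (size w)); last by rewrite mem_words.
  by apply/mapP; exists (size w); rewrite // mem_iota.
Qed.

Variables (R : relset A) (n : nat).
Hypothesis hR : homogeneous R.

Lemma nary_rels_nary_homogeneous : nary_homogeneous n (nary_rels n R).
Proof.
move=> _ _ [u [v [l [r [Rlr -> -> sz]]]]]; split=> //.
by rewrite -sz !size_cat (hR Rlr).
Qed.

Lemma nary_rels_multihomogeneous :
  multihomogeneous R -> multihomogeneous (nary_rels n R).
Proof.
move=> mhR _ _ [u [v [l [r [Rlr -> -> _]]]]] a.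
by rewrite !count_cat (mhR _ _ Rlr).
Qed.

Lemma step_nary_rels w1 w2 : step (nary_rels n R) w1 w2 -> step R w1 w2.
Proof.
move=> [x y _ _ [u [v [l [r [Rlr -> -> _]]]]]].
by have := step_intro (x ++ u) (v ++ y) Rlr; rewrite -!catA.
Qed.

Hypothesis le_rels_n : forall l r, R l r -> size l <= n.

Lemma step_nary_rels_long w1 w2 :
  step R w1 w2 -> n <= size w1 -> step (nary_rels n R) w1 w2.
Proof.
move=> [x y l r Rlr] le_n_w1.
have [x1 [x2 [y1 [y2 [-> -> sz_window]]]]] := split_window (le_rels_n Rlr) le_n_w1.
have reassoc z : (x1 ++ x2) ++ z ++ y1 ++ y2 = x1 ++ (x2 ++ z ++ y1) ++ y2.
  by rewrite -!catA.
by rewrite !reassoc; apply: step_intro; exists x2, y1, l, r.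
Qed.

(* Homogeneity of R keeps every word of the derivation of length >= n. *)
Lemma congr_nary_rels_long w1 w2 :
  congr R w1 w2 -> n <= size w1 -> congr (nary_rels n R) w1 w2.
Proof.
elim=> [? ? st | w | ? ? ww' IH | ? w' ? ww' IH1 _ IH2] le_n_w.
- exact/rst_step/step_nary_rels_long.
- exact: rst_refl.
- by apply/rst_sym/IH; rewrite (congr_size hR ww').
- by apply: rst_trans (IH1 le_n_w) (IH2 _); rewrite -(congr_size hR ww').
Qed.

Lemma canonical_iso_nary_rels : canonical_iso R (nary_rels n R) n.
Proof.
have congr_R := congr_sub step_nary_rels.
split.
- by move=> w [w' [ww' le_n_w']]; exists w'; split=> //; apply: congr_R.
- by move=> w1 w2 _ _; apply: congr_R.
- move=> w1 w2 [w' [w1w' le_n_w']] _ /congr_nary_rels_long; apply.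
  by rewrite (congr_size hR (congr_R _ _ w1w')).
- move=> w [w' [ww' le_n_w']]; exists w'; split; last exact: rst_sym.
  by exists w'; split=> //; apply: rst_refl.
Qed.

End Congruence.

Theorem proposition5p5 (A : finType) (R : seq (word A * word A)) (n : nat)
    (hR : homogeneous (of_seq R))
    (hn : forall l r, (l, r) \in R -> size l <= n /\ size r <= n) :
  let R' := nary_rels n (of_seq R) in
  [/\ finite_relset R',
      nary_homogeneous n R' &
      (multihomogeneous (of_seq R) -> nary_multihomogeneous n R')] /\
  [/\ finite_rees_index_ideal (of_seq R) n,
      finite_rees_index_ideal R' n &
      canonical_iso (of_seq R) R' n].
Proof.
move=> R'.
have nhR' : nary_homogeneous n R' := nary_rels_nary_homogeneous hR.
have le_rels_n l r : of_seq R l r -> size l <= n by case/hn.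
split; split.
- exact: nary_homogeneous_finite nhR'.
- exact: nhR'.
- by move=> mhR; split; last exact: nary_rels_multihomogeneous.
- exact: finite_rees_index_ideal_all.
- exact: finite_rees_index_ideal_all.
- exact: canonical_iso_nary_rels.
Qed.
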